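(* Let $\Sigma$ be a finite set of formulas closed under subformulas. Then for every $\Gamma\in W_c$ and $\varphi\in\Sigma$, $(\mathcal M^{\mathsf{CS4}}_\Sigma,\Gamma)\models\varphi$ iff $\varphi\in\Gamma^+$; consequently, for $\varphi\in\Sigma$, $\mathsf{CS4}\vdash\varphi$ iff $\mathcal M^{\mathsf{CS4}}_\Sigma\models\varphi$.
   Context: Formulas over a countably infinite set $\mathbb P$: $p\mid\bot\mid\varphi\wedge\psi\mid\varphi\vee\psi\mid\varphi\to\psi\mid\Diamond\varphi\mid\Box\varphi$; $\mathcal L$ is the set of all formulas. Satisfaction in a structure $(W,W_\bot,\preccurlyeq,\sqsubseteq,V)$: $p$ iff $w\in V(p)$; $\bot$ iff $w\in W_\bot$; $\wedge,\vee$ pointwise; $w\models\varphi\to\psi$ iff for all $v\succcurlyeq w$, $v\models\varphi$ implies $v\models\psi$; $w\models\Diamond\varphi$ iff for all $u\succcurlyeq w$ there is $v\sqsupseteq u$ with $v\models\varphi$; $w\models\Box\varphi$ iff $v\models\varphi$ whenever $w\preccurlyeq u\sqsubseteq v$; $\mathcal M\models\varphi$ iff $\varphi$ holds at every $w\in W\setminus W_\bot$. $\mathsf{CS4}$ is the least set of formulas containing all intuitionistic propositional tautologies and all instances of $\Box(\varphi\to\psi)\to(\Box\varphi\to\Box\psi)$, $\Box(\varphi\to\psi)\to(\Diamond\varphi\to\Diamond\psi)$, $\Box\varphi\to\varphi$, $\varphi\to\Diamond\varphi$, $\Box\varphi\to\Box\Box\varphi$, $\Diamond\Diamond\varphi\to\Diamond\varphi$,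 closed under modus ponens and necessitation. $\Gamma\vdash\Delta$ means $\mathsf{CS4}\vdash\bigwedge\Gamma'\to\bigvee\Delta'$ for finite $\Gamma'\subseteq\Gamma$, $\Delta'\subseteq\Delta$. A set $X$ is prime if $X\vdash\varphi$ implies $\varphi\in X$ and $\varphi\vee\psi\in X$ implies $\varphi\in X$ or $\psi\in X$. A $\mathsf{CS4}$-theory is a pair $\Phi=(\Phi^+;\Phi^\Diamond)$ with $\Phi^+$ prime and $\Diamond\bigvee\Psi\notin\Phi^+$ for every nonempty finite $\Psi\subseteq\Phi^\Diamond$. $\Phi^\Box=\{\varphi:\Box\varphi\in\Phi^+\}$. $W_c$ = all $\mathsf{CS4}$-theories; $W_{\bot c}=\{(\mathcal L;\varnothing)\}$; $\Phi\preccurlyeq_c\Psi$ iff $\Phi^+\subseteq\Psi^+$; $\Phi\sqsubseteq_c\Psi$ iff $\Phi^\Box\subseteq\Psi^+$ and $\Phi^\Diamond\subseteq\Psi^\Diamond$; $V_c(p)=\{\Phi:p\in\Phi^+\}$. For $\Gamma,\Delta\in W_c$, $\Gamma\preccurlyeq_\Sigma\Delta$ iff $\Gamma\preccurlyeq_c\Delta$ and either $\Gamma^+=\Delta^+$ or there is $\chi\in\Sigma$ with $\chi\in\Delta^+\setminus\Gamma^+$. $\mathcal M^{\mathsf{CS4}}_\Sigma=(W_c,W_{\bot c},\preccurlyeq_\Sigma,\sqsubseteq_c,V_c)$. *)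

From Stdlib Require Import List.
Import ListNotations.

Inductive form : Type :=
| Var : nat -> form
| Bot : form
| And : form -> form -> form
| Or  : form -> form -> form
| Imp : form -> form -> form
| Dia : form -> form
| Box : form -> form.

Definition Top : form := Imp Bot Bot.

Fixpoint bigAnd (l : list form) : form :=
  match l with
  | [] => Top
  | [a] => a
  | a :: l' => And a (bigAnd l')
  end.

Fixpoint bigOr (l : list form) : form :=
  match l with
  | [] => Bot
  | [a] => a
  | a :: l' => Or a (bigOr l')
  end.

(* Axioms (1)-(9) axiomatize intuitionistic
   propositional logic with bottom primitive; taken as schemata over the whole
   modal language together with modus ponens they yield exactly all instances
   of intuitionistic propositional tautologies. *)
Inductive CS4 : form -> Prop :=
| ax_K    a b   : CS4 (Imp a (Imp b a))
| ax_S    a b c : CS4 (Imp (Imp a (Imp b c)) (Imp (Imp a b) (Imp a c)))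
| ax_andE1 a b  : CS4 (Imp (And a b) a)
| ax_andE2 a b  : CS4 (Imp (And a b) b)
| ax_andI a b   : CS4 (Imp a (Imp b (And a b)))
| ax_orI1 a b   : CS4 (Imp a (Or a b))
| ax_orI2 a b   : CS4 (Imp b (Or a b))
| ax_orE  a b c : CS4 (Imp (Imp a c) (Imp (Imp b c) (Imp (Or a b) c)))
| ax_efq  a     : CS4 (Imp Bot a)
| ax_boxK a b   : CS4 (Imp (Box (Imp a b)) (Imp (Box a) (Box b)))
| ax_diaK a b   : CS4 (Imp (Box (Imp a b)) (Imp (Dia a) (Dia b)))
| ax_T    a     : CS4 (Imp (Box a) a)
| ax_diaT a     : CS4 (Imp a (Dia a))
| ax_4    a     : CS4 (Imp (Box a) (Box (Box a)))
| ax_dia4 a     : CS4 (Imp (Dia (Dia a)) (Dia a))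
| rule_MP a b   : CS4 (Imp a b) -> CS4 a -> CS4 b
| rule_Nec a    : CS4 a -> CS4 (Box a).

Definition derives (Gamma Delta : form -> Prop) : Prop :=
  exists (lG lD : list form),
    (forall x, In x lG -> Gamma x) /\ (forall x, In x lD -> Delta x) /\
    CS4 (Imp (bigAnd lG) (bigOr lD)).

Definition prime (X : form -> Prop) : Prop :=
  (forall phi, derives X (fun psi => psi = phi) -> X phi) /\
  (forall phi psi, X (Or phi psi) -> X phi \/ X psi).

Record theory : Type := {
  tplus : form -> Prop;
  tdia  : form -> Prop;
  tplus_prime : prime tplus;
  tdia_cons : forall Psi : list form, Psi <> [] ->
      (forall x, In x Psi -> tdia x) -> ~ tplus (Dia (bigOr Psi))
}.

Definition tbox (G : theory) (phi : form) : Prop := tplus G (Box phi).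

Record structure : Type := {
  world : Type;
  wbot  : world -> Prop;
  wle   : world -> world -> Prop;   (* intuitionistic order *)
  wsq   : world -> world -> Prop;   (* modal relation *)
  val   : nat -> world -> Prop
}.

Fixpoint sat (M : structure) (w : world M) (phi : form) : Prop :=
  match phi with
  | Var p => val M p w
  | Bot => wbot M w
  | And a b => sat M w a /\ sat M w b
  | Or a b => sat M w a \/ sat M w b
  | Imp a b => forall v, wle M w v -> sat M v a -> sat M v b
  | Dia a => forall u, wle M w u -> exists v, wsq M u v /\ sat M v a
  | Box a => forall u v, wle M w u -> wsq M u v -> sat M v a
  end.

Definition valid (M : structure) (phi : form) : Prop :=
  forall w : world M, ~ wbot M w -> sat M w phi.

Definition bot_c (G : theory) : Prop :=
  (forall phi, tplus G phi) /\ (forall phi, ~ tdia G phi).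

Definition le_c (G D : theory) : Prop := forall phi, tplus G phi -> tplus D phi.

Definition sq_c (G D : theory) : Prop :=
  (forall phi, tbox G phi -> tplus D phi) /\ (forall phi, tdia G phi -> tdia D phi).

Definition le_Sigma (Sigma : form -> Prop) (G D : theory) : Prop :=
  le_c G D /\
  ((forall phi, tplus G phi <-> tplus D phi) \/
   (exists chi, Sigma chi /\ tplus D chi /\ ~ tplus G chi)).

Definition canonical_model (Sigma : form -> Prop) : structure := {|
  world := theory;
  wbot := bot_c;
  wle := le_Sigma Sigma;
  wsq := sq_c;
  val := fun p G => tplus G (Var p)
|}.

Fixpoint subformulas (phi : form) : list form :=
  phi :: match phi with
         | Var _ | Bot => []
         | And a b | Or a b | Imp a b => subformulas a ++ subformulas b
         | Dia a | Box a => subformulas a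
         end.

Definition finite_set (S : form -> Prop) : Prop :=
  exists l : list form, forall phi, S phi <-> In phi l.

Definition subformula_closed (S : form -> Prop) : Prop :=
  forall phi psi, S phi -> In psi (subformulas phi) -> S psi.

(* The proof is the standard canonical-model argument.  The truth lemma is then an induction on formulas inside
   Sigma; the restriction of the intuitionistic order to Sigma-witnessed
   steps is respected because each implication witness adds the antecedent,
   which lies in Sigma.  Completeness for theorems follows by applying the
   truth lemma to a prime set refuting a non-theorem. *)

From Stdlib Require Import List Classical Cantor Lia.
Import ListNotations.

(* [der H a]: a follows from the hypotheses H by theorems of CS4 and modus
   ponens (necessitation is only applied to theorems). *)
Inductive der (H : list form) : form -> Prop :=
| dhyp a : In a H -> der H a
| dthm a : CS4 a -> der H a
| dmp a b : der H (Imp a b) -> der H a -> der H b.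

Lemma thm_id a : CS4 (Imp a a).
Proof.
  eapply rule_MP; [eapply rule_MP; [apply (ax_S a (Imp a a) a) | apply ax_K]|].
  apply (ax_K a a).
Qed.

Lemma der_weak H H' a : der H a -> incl H H' -> der H' a.
Proof.
  induction 1; intros; [apply dhyp; auto | apply dthm; auto | eapply dmp; eauto].
Qed.

Lemma deduction a H b : der (a :: H) b -> der H (Imp a b).
Proof.
  induction 1 as [c [<- | Hc] | c Hc | c d _ IHcd _ IHc].
  - apply dthm, thm_id.
  - eapply dmp; [apply dthm, ax_K | now apply dhyp].
  - eapply dmp; [apply dthm, ax_K | now apply dthm].
  - eapply dmp; [eapply dmp; [apply dthm, ax_S | exact IHcd] | exact IHc].
Qed.

Lemma der_nil a : der [] a -> CS4 a.
Proof. induction 1; [contradiction | auto | eapply rule_MP; eauto]. Qed.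

Lemma der_cut H H' b : der H b -> (forall a, In a H -> der H' a) -> der H' b.
Proof. induction 1; intros; [auto | apply dthm; auto | eapply dmp; eauto]. Qed.

Lemma der_thm_mp H a b : CS4 (Imp a b) -> der H a -> der H b.
Proof. intros; eapply dmp; [apply dthm; eauto | auto]. Qed.

Lemma der_and H a b : der H a -> der H b -> der H (And a b).
Proof. intros; eapply dmp; [eapply dmp; [apply dthm, ax_andI |] |]; eauto. Qed.

Lemma der_orE H a b c :
  der H (Or a b) -> der (a :: H) c -> der (b :: H) c -> der H c.
Proof.
  intros Hab Ha Hb. eapply dmp; [| exact Hab].
  eapply dmp; [eapply dmp; [apply dthm, ax_orE |] |]; apply deduction; auto.
Qed.

Lemma bigAnd_in H x : In x H -> der [bigAnd H] x.
Proof.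
  induction H as [| y [| z H'] IH]; simpl; [tauto | |].
  - intros [<- | []]. apply dhyp; simpl; auto.
  - intros [<- | Hi].
    + eapply der_thm_mp; [apply ax_andE1 | apply dhyp; simpl; auto].
    + eapply der_cut; [apply IH, Hi |]. intros a [<- | []].
      eapply der_thm_mp; [apply ax_andE2 | apply dhyp; simpl; auto].
Qed.

Lemma bigAnd_der H : der H (bigAnd H).
Proof.
  induction H as [| y [| z H'] IH]; simpl.
  - apply dthm, thm_id.
  - apply dhyp; simpl; auto.
  - apply der_and; [apply dhyp; simpl; auto |].
    eapply der_weak; [exact IH |]. intros x; simpl; tauto.
Qed.

Lemma der_to_CS4 H a : der H a -> CS4 (Imp (bigAnd H) a).
Proof.
  intros D. apply der_nil, deduction. eapply der_cut; [exact D |].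
  intros x Hx. apply bigAnd_in, Hx.
Qed.

Lemma CS4_to_der H a : CS4 (Imp (bigAnd H) a) -> der H a.
Proof. intros C. eapply der_thm_mp; [exact C | apply bigAnd_der]. Qed.

Lemma bigOr_in l x : In x l -> der [x] (bigOr l).
Proof.
  induction l as [| y [| z l'] IH]; simpl; [tauto | |].
  - intros [<- | []]. apply dhyp; simpl; auto.
  - intros [<- | Hi].
    + eapply der_thm_mp; [apply ax_orI1 | apply dhyp; simpl; auto].
    + eapply der_thm_mp; [apply ax_orI2 | apply IH, Hi].
Qed.

Lemma bigOr_elim H l c :
  der H (bigOr l) -> (forall x, In x l -> der (x :: H) c) -> der H c.
Proof.
  revert H; induction l as [| y [| z l'] IH]; simpl; intros H D E.
  - eapply der_thm_mp; [apply ax_efq | exact D].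
  - eapply der_cut; [apply E; auto |]. intros a [<- | Ha]; [exact D | apply dhyp; auto].
  - eapply der_orE; [exact D | apply E; auto |].
    apply IH; [apply dhyp; simpl; auto |].
    intros x Hx. eapply der_weak; [apply (E x); simpl; auto |].
    intros w; simpl; tauto.
Qed.

Lemma bigOr_elim_const H l c : der H (bigOr l) -> (forall x, In x l -> x = c) -> der H c.
Proof.
  intros D E. apply (bigOr_elim H l c D).
  intros x Hx; rewrite (E x Hx); apply dhyp; left; auto.
Qed.

Lemma bigOr_mono l l' : incl l l' -> CS4 (Imp (bigOr l) (bigOr l')).
Proof.
  intros I. apply der_nil, deduction. eapply bigOr_elim; [apply dhyp; simpl; auto |].
  intros x Hx. eapply der_weak; [apply bigOr_in, I, Hx |]. intros w; simpl; tauto.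
Qed.

Lemma dia_mono a b : CS4 (Imp a b) -> CS4 (Imp (Dia a) (Dia b)).
Proof. intros; eapply rule_MP; [apply ax_diaK | apply rule_Nec; auto]. Qed.

Lemma der_box l a : der l a -> der (map Box l) (Box a).
Proof.
  revert a; induction l as [| x l IH]; simpl; intros a D.
  - apply dthm, rule_Nec, der_nil, D.
  - apply deduction, IH in D.
    eapply dmp; [eapply dmp; [apply dthm, ax_boxK |] |].
    + eapply der_weak; [exact D |]. intros w; simpl; tauto.
    + apply dhyp; simpl; auto.
Qed.

Definition pder (X D : form -> Prop) : Prop :=
  exists lG lD, (forall x, In x lG -> X x) /\ (forall x, In x lD -> D x) /\
    der lG (bigOr lD).

Lemma pder_mono (X X' D : form -> Prop) :
  (forall x, X x -> X' x) -> pder X D -> pder X' D.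
Proof. intros S (lG & lD & H1 & H2 & H3). exists lG, lD; auto. Qed.

Lemma pder_single (X D : form -> Prop) b : X b -> D b -> pder X D.
Proof.
  intros Xb Db. exists [b], [b]. repeat split.
  - intros x [<- | []]; auto.
  - intros x [<- | []]; auto.
  - apply dhyp; left; auto.
Qed.

Lemma pder_ext (Y D : form -> Prop) phi : pder (fun x => Y x \/ x = phi) D ->
  exists lG lD, (forall x, In x lG -> Y x) /\ (forall x, In x lD -> D x) /\
    der (phi :: lG) (bigOr lD).
Proof.
  intros (lG & lD & H1 & H2 & H3).
  assert (Hsplit : exists lG', (forall x, In x lG' -> Y x) /\ incl lG (phi :: lG')).
  { clear H3. induction lG as [| y l IH].
    - exists []. split; [simpl; tauto | intros w []].
    - destruct IH as (l' & A & B); [intros x Hx; apply H1; simpl; auto |].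
      destruct (H1 y (or_introl eq_refl)) as [Hy | ->].
      + exists (y :: l'). split; [intros x [<- | Hx]; auto |].
        intros w [<- | Hw]; simpl; auto. apply B in Hw. simpl in Hw; tauto.
      + exists l'. split; auto. intros w [<- | Hw]; simpl; auto.
        apply B in Hw. simpl in Hw; tauto. }
  destruct Hsplit as (lG' & A & B).
  exists lG', lD. repeat split; auto. eapply der_weak; eauto.
Qed.

Lemma pder_ext_single (Y : form -> Prop) a b :
  pder (fun x => Y x \/ x = a) (fun x => x = b) ->
  exists lG, (forall x, In x lG -> Y x) /\ der lG (Imp a b).
Proof.
  intros Hd. apply pder_ext in Hd as (lG & lD & A & B & C).
  exists lG. split; auto. apply deduction, (bigOr_elim_const _ lD); auto.
Qed.

Lemma prime_closed (Y : form -> Prop) l a :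
  prime Y -> (forall x, In x l -> Y x) -> der l a -> Y a.
Proof.
  intros HY Hl D. apply (proj1 HY). exists l, [a]. repeat split; auto.
  - intros x [<- | []]; auto.
  - apply der_to_CS4, D.
Qed.

Fixpoint enc (f : form) : nat :=
  match f with
  | Var p => to_nat (0, p)
  | Bot => to_nat (1, 0)
  | And a b => to_nat (2, to_nat (enc a, enc b))
  | Or a b => to_nat (3, to_nat (enc a, enc b))
  | Imp a b => to_nat (4, to_nat (enc a, enc b))
  | Dia a => to_nat (5, enc a)
  | Box a => to_nat (6, enc a)
  end.

Lemma to_nat_inj p q : to_nat p = to_nat q -> p = q.
Proof. intros E. rewrite <- (cancel_of_to p), <- (cancel_of_to q), E. auto. Qed.

Lemma enc_inj f g : enc f = enc g -> f = g.
Proof.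
  revert g; induction f; destruct g; cbn -[to_nat]; intros E;
  repeat match goal with H : to_nat _ = to_nat _ |- _ =>
    apply to_nat_inj, pair_equal_spec in H; destruct H as [? H] end;
  try discriminate; subst; f_equal; auto.
Qed.

Section Lindenbaum.
Variables X D : form -> Prop.

Fixpoint stage (n : nat) : form -> Prop :=
  match n with
  | 0 => X
  | S n => fun f => stage n f \/ (enc f = n /\ ~ pder (fun g => stage n g \/ g = f) D)
  end.

Definition lind : form -> Prop := fun f => exists n, stage n f.

Lemma stage_mono n m : n <= m -> forall f, stage n f -> stage m f.
Proof. induction 1; simpl; auto. Qed.

Lemma stage_list l : (forall x, In x l -> lind x) -> exists N, forall x, In x l -> stage N x.
Proof.
  induction l as [| y l IH]; intros H.
  - exists 0; intros x [].
  - destruct IH as [N HN]; [intros x Hx; apply H; simpl; auto |].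
    destruct (H y (or_introl eq_refl)) as [M HM].
    exists (N + M). intros x [<- | Hx].
    + eapply stage_mono; [| exact HM]; lia.
    + eapply stage_mono; [| apply HN, Hx]; lia.
Qed.

Hypothesis X_consistent : ~ pder X D.

Lemma stage_ok n : ~ pder (stage n) D.
Proof.
  induction n as [| n IH]; simpl; auto. intros Hd.
  destruct (classic (exists f, enc f = n /\ ~ pder (fun g => stage n g \/ g = f) D))
    as [(f & Ef & Hf) | Hno].
  - apply Hf. eapply pder_mono; [| exact Hd]. simpl. intros g [Hg | [Eg _]]; auto.
    right. apply enc_inj. congruence.
  - apply IH. eapply pder_mono; [| exact Hd]. simpl. intros g [Hg | [Eg Hg]]; auto.
    exfalso; apply Hno; eauto.
Qed.

(* Consistency survives the limit, since derivations use finitely many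
   hypotheses. *)
Lemma lind_ok : ~ pder lind D.
Proof.
  intros (lG & lD & H1 & H2 & H3).
  destruct (stage_list lG H1) as [N HN].
  apply (stage_ok N). exists lG, lD; auto.
Qed.

Lemma lind_max phi : lind phi \/ pder (fun g => lind g \/ g = phi) D.
Proof.
  destruct (classic (pder (fun g => stage (enc phi) g \/ g = phi) D)) as [Hd | Hd].
  - right. eapply pder_mono; [| exact Hd].
    intros g [Hg | Hg]; [left; exists (enc phi) | right]; auto.
  - left. exists (S (enc phi)). simpl. right. auto.
Qed.

Lemma lind_closed l phi : (forall x, In x l -> lind x) -> der l phi -> lind phi.
Proof.
  intros Hl Dl. destruct (lind_max phi) as [| Hd]; auto.
  apply pder_ext in Hd as (lG & lD & A & B & C).
  exfalso; apply lind_ok. exists (l ++ lG), lD. repeat split; auto.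
  - intros x Hx. apply in_app_or in Hx as [Hx | Hx]; auto.
  - eapply der_cut; [exact C |]. intros a [<- | Ha].
    + eapply der_weak; [exact Dl |]. intros w Hw; apply in_or_app; auto.
    + apply dhyp, in_or_app; auto.
Qed.

Lemma lind_or a b : lind (Or a b) -> lind a \/ lind b.
Proof.
  intros Hab. destruct (lind_max a) as [| Ha]; auto.
  destruct (lind_max b) as [| Hb]; auto.
  apply pder_ext in Ha as (l1 & d1 & A1 & B1 & C1).
  apply pder_ext in Hb as (l2 & d2 & A2 & B2 & C2).
  exfalso; apply lind_ok. exists (Or a b :: l1 ++ l2), (d1 ++ d2). repeat split.
  - intros x [<- | Hx]; auto. apply in_app_or in Hx as [Hx | Hx]; auto.
  - intros x Hx. apply in_app_or in Hx as [Hx | Hx]; auto.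
  - eapply der_orE; [apply dhyp; simpl; auto | |].
    + eapply der_thm_mp; [apply (bigOr_mono d1); intros w Hw; apply in_or_app; auto |].
      eapply der_weak; [exact C1 |]. intros w [<- | Hw]; simpl; auto.
      right; right; apply in_or_app; auto.
    + eapply der_thm_mp; [apply (bigOr_mono d2); intros w Hw; apply in_or_app; auto |].
      eapply der_weak; [exact C2 |]. intros w [<- | Hw]; simpl; auto.
      right; right; apply in_or_app; auto.
Qed.

Lemma lind_prime : prime lind.
Proof.
  split; [| apply lind_or].
  intros phi (lG & lD & A & B & C).
  apply (lind_closed lG); auto.
  apply CS4_to_der in C. apply (bigOr_elim_const _ lD); auto.
Qed.

End Lindenbaum.

Lemma lindenbaum (X D : form -> Prop) : ~ pder X D ->
  exists Y, (forall x, X x -> Y x) /\ prime Y /\ ~ pder Y D.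
Proof.
  intros H. exists (lind X D).
  split; [intros x Hx; exists 0; auto | split; [apply lind_prime | apply lind_ok]; auto].
Qed.

Lemma refuting_prime phi : ~ CS4 phi -> exists Y, prime Y /\ ~ Y phi.
Proof.
  intros Hn.
  assert (Hd : ~ pder (fun _ => False) (fun x => x = phi)).
  { intros (lG & lD & A & B & C). apply Hn.
    destruct lG as [| g]; [| exfalso; apply (A g); left; auto].
    apply der_nil, (bigOr_elim_const _ lD); auto. }
  destruct (lindenbaum _ _ Hd) as (Y & _ & HY & Hok).
  exists Y. split; auto. intros Hy. apply Hok, (pder_single _ _ _ Hy); auto.
Qed.

Lemma theory_closed (G : theory) l a :
  (forall x, In x l -> tplus G x) -> der l a -> tplus G a.
Proof. apply prime_closed, tplus_prime. Qed.

Lemma theory_thm (G : theory) a : CS4 a -> tplus G a.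
Proof. intros C. apply (theory_closed G []); [intros x [] | apply dthm; auto]. Qed.

Lemma theory_mp (G : theory) a b : CS4 (Imp a b) -> tplus G a -> tplus G b.
Proof.
  intros C H. apply (theory_closed G [a]); [intros x [<- | []]; auto |].
  eapply der_thm_mp; [exact C | apply dhyp; left; auto].
Qed.

Lemma theory_der2 (G : theory) a b c :
  der [a; b] c -> tplus G a -> tplus G b -> tplus G c.
Proof. intros D H1 H2. apply (theory_closed G [a; b]); auto. intros x [<- | [<- | []]]; auto. Qed.

Lemma theory_dia_excl (G : theory) a : tplus G a -> tdia G a -> False.
Proof.
  intros Ha Hd. apply (tdia_cons G [a]); [congruence | intros x [<- | []]; auto |].
  apply (theory_mp G a); [apply ax_diaT | exact Ha].
Qed.

Definition plain_theory (Y : form -> Prop) (HY : prime Y) : theory.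
Proof.
  refine (Build_theory Y (fun _ => False) HY _).
  intros [| f Psi] Hne Hin; [congruence | destruct (Hin f (or_introl eq_refl))].
Defined.

Definition full_theory : theory.
Proof. refine (plain_theory (fun _ => True) _). split; auto. Defined.

Lemma bot_c_iff (G : theory) : bot_c G <-> tplus G Bot.
Proof.
  split; [intros [H _]; apply H |].
  intros H. split.
  - intros phi. apply (theory_mp G Bot); auto. apply ax_efq.
  - intros phi Hd. apply (theory_dia_excl G phi); auto.
    apply (theory_mp G Bot); auto. apply ax_efq.
Qed.

Lemma imp_witness (G : theory) a b : ~ tplus G (Imp a b) ->
  exists Y, prime Y /\ (forall x, tplus G x -> Y x) /\ Y a /\ ~ Y b.
Proof.
  intros Hn.
  assert (Hd : ~ pder (fun x => tplus G x \/ x = a) (fun x => x = b)).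
  { intros Hd. apply pder_ext_single in Hd as (lG & A & C).
    apply Hn, (theory_closed G lG); auto. }
  destruct (lindenbaum _ _ Hd) as (Y & HXY & HY & Hok).
  exists Y. split; [exact HY | split; [intros x Hx; apply HXY; auto | split; [apply HXY; auto |]]].
  intros Hb. apply Hok, (pder_single _ _ _ Hb); auto.
Qed.

Lemma dia_refuter (G : theory) a : ~ tplus G (Dia a) ->
  exists U : theory, (forall x, tplus U x <-> tplus G x) /\ tdia U a.
Proof.
  intros Hn.
  assert (Hcons : forall Psi, Psi <> [] -> (forall x, In x Psi -> x = a) ->
             ~ tplus G (Dia (bigOr Psi))).
  { intros Psi _ Hin HP. apply Hn. eapply theory_mp; [| exact HP].
    apply dia_mono, der_nil, deduction, (bigOr_elim_const _ Psi); auto.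
    apply dhyp; left; auto. }
  exists (Build_theory (tplus G) (fun x => x = a) (tplus_prime G) Hcons).
  simpl; tauto.
Qed.

Definition dia_excluded (u : theory) (x : form) : Prop :=
  exists Psi, Psi <> [] /\ (forall y, In y Psi -> tdia u y) /\ x = Dia (bigOr Psi).

Lemma dia_excluded_collect (u : theory) lD :
  (forall x, In x lD -> dia_excluded u x) ->
  exists Psi, (forall y, In y Psi -> tdia u y) /\
    forall x, In x lD -> exists P, incl P Psi /\ x = Dia (bigOr P).
Proof.
  induction lD as [| d lD IH]; intros B.
  - exists []. split; intros x [].
  - destruct IH as (Psi & P1 & P2); [intros; apply B; right; auto |].
    destruct (B d (or_introl eq_refl)) as (P & _ & HP & ->).
    exists (P ++ Psi). split.
    + intros y Hy; apply in_app_or in Hy as [Hy | Hy]; auto.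
    + intros x [<- | Hx].
      * exists P. split; auto. intros w Hw; apply in_or_app; auto.
      * destruct (P2 x Hx) as (Q & HQ & ->). exists Q. split; auto.
        intros w Hw; apply in_or_app; auto.
Qed.

Lemma dia_successor_consistent (u : theory) a x0 :
  tplus u (Dia a) -> tdia u x0 ->
  ~ pder (fun x => tbox u x \/ x = a) (dia_excluded u).
Proof.
  intros Hu Hx0 Hd. apply pder_ext in Hd as (lG & lD & A & B & C).
  destruct (dia_excluded_collect u lD B) as (Psi & P1 & P2).
  assert (Himp : der lG (Imp a (Dia (bigOr (x0 :: Psi))))).
  { apply deduction, (bigOr_elim _ _ _ C). intros x Hx.
    destruct (P2 x Hx) as (Q & HQ & ->).
    eapply der_thm_mp; [apply dia_mono, bigOr_mono | apply dhyp; left; auto].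
    intros w Hw; right; auto. }
  assert (Hb : tplus u (Box (Imp a (Dia (bigOr (x0 :: Psi)))))).
  { apply (theory_closed u (map Box lG)); [| apply der_box, Himp].
    intros x Hx. apply in_map_iff in Hx as (y & <- & Hy). apply A, Hy. }
  apply (tdia_cons u (x0 :: Psi)); [congruence | intros y [<- | Hy]; auto |].
  eapply theory_mp; [apply ax_dia4 |].
  eapply theory_der2; [| exact Hb | exact Hu].
  eapply dmp; [eapply dmp; [apply dthm, ax_diaK |] |]; apply dhyp; simpl; auto.
Qed.

Lemma dia_successor (u : theory) a : tplus u (Dia a) ->
  exists v, sq_c u v /\ tplus v a.
Proof.
  intros Hu. destruct (classic (exists x0, tdia u x0)) as [[x0 Hx0] | Hno].
  - destruct (lindenbaum _ _ (dia_successor_consistent u a x0 Hu Hx0))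
      as (Y & HXY & HY & Hok).
    assert (Hcons : forall Psi, Psi <> [] -> (forall x, In x Psi -> tdia u x) ->
               ~ Y (Dia (bigOr Psi))).
    { intros Psi Hne Hin HP. apply Hok, (pder_single _ _ _ HP). exists Psi; auto. }
    exists (Build_theory Y (tdia u) HY Hcons). simpl.
    split; [split; simpl; auto | apply HXY; auto].
  - exists full_theory. simpl. split; [split; simpl; auto |  auto].
    intros x Hx; apply Hno; eauto.
Qed.

Lemma box_witness (G : theory) a : ~ tplus G (Box a) ->
  exists Y, prime Y /\ (forall x, tbox G x -> Y x) /\ ~ Y a.
Proof.
  intros Hn.
  assert (Hd : ~ pder (tbox G) (fun x => x = a)).
  { intros (lG & lD & A & B & C). apply Hn.
    apply (theory_closed G (map Box lG)); [| apply der_box, (bigOr_elim_const _ lD); auto].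
    intros x Hx. apply in_map_iff in Hx as (y & <- & Hy). apply A, Hy. }
  destruct (lindenbaum _ _ Hd) as (Y & HXY & HY & Hok).
  exists Y. split; [exact HY | split; [exact HXY |]].
  intros Hy. apply Hok, (pder_single _ _ _ Hy); auto.
Qed.

Lemma le_Sigma_refl (Sigma : form -> Prop) (G : theory) : le_Sigma Sigma G G.
Proof. split; [intros x; auto | left; tauto]. Qed.

Lemma in_sub_self a : In a (subformulas a).
Proof. destruct a; left; reflexivity. Qed.

Section Truth.
Variable Sigma : form -> Prop.
Hypothesis Sigma_closed : subformula_closed Sigma.

Lemma sigma_binary (f : form -> form -> form) a b :
  (forall x y, subformulas (f x y) = f x y :: subformulas x ++ subformulas y) ->
  Sigma (f a b) -> Sigma a /\ Sigma b.
Proof.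
  intros E H. split; apply (Sigma_closed _ _ H); rewrite E; right; apply in_or_app;
  [left | right]; apply in_sub_self.
Qed.

Lemma sigma_unary (f : form -> form) a :
  (forall x, subformulas (f x) = f x :: subformulas x) -> Sigma (f a) -> Sigma a.
Proof. intros E H. apply (Sigma_closed _ _ H). rewrite E. right; apply in_sub_self. Qed.

Lemma truth_imp (G : theory) a b :
  Sigma a -> (forall G : theory, sat (canonical_model Sigma) G a <-> tplus G a) ->
  (forall G : theory, sat (canonical_model Sigma) G b <-> tplus G b) ->
  sat (canonical_model Sigma) G (Imp a b) <-> tplus G (Imp a b).
Proof.
  intros Sa IHa IHb. simpl. split.
  - intros H. apply NNPP. intros Hn.
    destruct (classic (tplus G a)) as [Ha | Ha].
    + apply Hn, (theory_mp G b); [apply ax_K |].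
      apply IHb, H; [apply le_Sigma_refl | apply IHa; auto].
    + destruct (imp_witness G a b Hn) as (Y & HY & HGY & Ya & Yb).
      apply Yb, (IHb (plain_theory Y HY)), H; [| apply IHa; auto].
      split; [exact HGY | right; exists a; auto].
  - intros H v [Hle _] Hva. apply IHb. apply IHa in Hva.
    eapply theory_der2; [| apply Hle, H | exact Hva].
    eapply dmp; apply dhyp; simpl; auto.
Qed.

Lemma truth_dia (G : theory) a :
  (forall G : theory, sat (canonical_model Sigma) G a <-> tplus G a) ->
  sat (canonical_model Sigma) G (Dia a) <-> tplus G (Dia a).
Proof.
  intros IHa. simpl. split.
  - intros H. apply NNPP. intros Hn.
    destruct (dia_refuter G a Hn) as (U & EU & Ua).
    destruct (H U) as (v & [_ Hv] & Hs).
    { split; [intros x; apply EU | left; intros x; symmetry; apply EU]. }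
    apply (theory_dia_excl v a); [apply IHa | apply Hv]; auto.
  - intros HG u [Hle _]. destruct (dia_successor u a (Hle _ HG)) as (v & Huv & Hv).
    exists v. split; [exact Huv | apply IHa, Hv].
Qed.

Lemma truth_box (G : theory) a :
  (forall G : theory, sat (canonical_model Sigma) G a <-> tplus G a) ->
  sat (canonical_model Sigma) G (Box a) <-> tplus G (Box a).
Proof.
  intros IHa. simpl. split.
  - intros H. apply NNPP. intros Hn.
    destruct (box_witness G a Hn) as (Y & HY & HbY & Ya).
    apply Ya, (IHa (plain_theory Y HY)).
    apply (H (plain_theory (tplus G) (tplus_prime G))).
    + split; [intros x; auto | left; tauto].
    + split; simpl; auto.
  - intros H u v [Hle _] [Hb _]. apply IHa, Hb, Hle, H.
Qed.

Lemma truth phi : Sigma phi ->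
  forall G : theory, sat (canonical_model Sigma) G phi <-> tplus G phi.
Proof.
  induction phi as [p | | a IHa b IHb | a IHa b IHb | a IHa b IHb | a IHa | a IHa];
    intros HS G.
  - simpl; tauto.
  - apply bot_c_iff.
  - destruct (sigma_binary And a b) as [Sa Sb]; auto. simpl.
    rewrite (IHa Sa G), (IHb Sb G). split.
    + intros [H1 H2]. eapply theory_der2; [| exact H1 | exact H2].
      apply der_and; apply dhyp; simpl; auto.
    + intros H; split; eapply theory_mp; eauto; [apply ax_andE1 | apply ax_andE2].
  - destruct (sigma_binary Or a b) as [Sa Sb]; auto. simpl.
    rewrite (IHa Sa G), (IHb Sb G). split.
    + intros [H | H]; eapply theory_mp; eauto; [apply ax_orI1 | apply ax_orI2].
    + apply (proj2 (tplus_prime G)).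
  - destruct (sigma_binary Imp a b) as [Sa Sb]; auto.
    apply truth_imp; auto.
  - apply truth_dia, IHa. apply (sigma_unary Dia); auto.
  - apply truth_box, IHa. apply (sigma_unary Box); auto.
Qed.

End Truth.

Theorem mainTheorem19 (Sigma : form -> Prop) :
  finite_set Sigma -> subformula_closed Sigma ->
  (forall (G : theory) (phi : form), Sigma phi ->
      (sat (canonical_model Sigma) G phi <-> tplus G phi)) /\
  (forall phi : form, Sigma phi ->
      (CS4 phi <-> valid (canonical_model Sigma) phi)).
Proof.
  intros _ Hc. split.
  - intros G phi HS. apply truth; auto.
  - intros phi HS. split.
    + intros C G _. apply truth, theory_thm; auto.
    + intros V. apply NNPP; intros Hn.
      destruct (refuting_prime phi Hn) as (Y & HY & Yphi).
      apply Yphi, (truth Sigma Hc phi HS (plain_theory Y HY)), V.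
      intros [Hall _]. apply Yphi, Hall.
Qed.
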